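(* Let $X$ and $Y$ be topological spaces, $Z$ a metric space, and $f:X\times Y\to Z$ a mapping. Suppose $Y$ has a countable base and that for every $y\in Y$ the mapping $f^y$ is quasicontinuous. Then there is a residual set $R\subset X$ such that for every $(a,b)\in R\times Y$, $f$ is continuous at $(a,b)$ provided $f_a$ is continuous at $b$.
   Context: $f_x(y)=f^y(x)=f(x,y)$. A mapping $g:X\to Z$ is quasicontinuous at $a$ if for each neighborhood $U$ of $a$ and each neighborhood $W$ of $g(a)$ there is an open $O$ with $\emptyset\ne O\subset U$ and $g(O)\subset W$; quasicontinuous means quasicontinuous at every point. Residual means containing a countable intersection of dense open sets. *)

From Stdlib Require Import Reals.
Open Scope R_scope.
Set Implicit Arguments.

Record topology (T : Type) := Topology {
  open : (T -> Prop) -> Prop;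
  open_full : open (fun _ => True);
  open_inter : forall U V, open U -> open V -> open (fun x => U x /\ V x);
  open_union : forall F : (T -> Prop) -> Prop,
      (forall U, F U -> open U) -> open (fun x => exists U, F U /\ U x)
}.

Record metric (T : Type) := Metric {
  dist : T -> T -> R;
  dist_nonneg : forall x y, 0 <= dist x y;
  dist_eq0 : forall x y, dist x y = 0 <-> x = y;
  dist_sym : forall x y, dist x y = dist y x;
  dist_tri : forall x y z, dist x z <= dist x y + dist y z
}.

Definition ball T (d : metric T) (c : T) (r : R) : T -> Prop :=
  fun z => dist d c z < r.

Definition metric_open T (d : metric T) (W : T -> Prop) : Prop :=
  forall z, W z -> exists r, 0 < r /\ forall w, ball d z r w -> W w.

Definition nbhd T (tau : topology T) (a : T) (N : T -> Prop) : Prop :=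
  exists U, open tau U /\ U a /\ forall x, U x -> N x.

Definition metric_nbhd T (d : metric T) (z : T) (N : T -> Prop) : Prop :=
  exists W, metric_open d W /\ W z /\ forall w, W w -> N w.

Definition prod_open X Y (tX : topology X) (tY : topology Y)
  (W : X * Y -> Prop) : Prop :=
  forall p, W p -> exists U V, open tX U /\ open tY V /\ U (fst p) /\ V (snd p) /\
     forall x y, U x -> V y -> W (x, y).

Definition continuous_at_gen A (op : (A -> Prop) -> Prop) Z (d : metric Z)
  (g : A -> Z) (a : A) : Prop :=
  forall N, metric_nbhd d (g a) N ->
    exists U, op U /\ U a /\ forall x, U x -> N (g x).

Definition continuous_at A (tA : topology A) Z (d : metric Z)
  (g : A -> Z) (a : A) : Prop := continuous_at_gen (open tA) d g a.

Definition quasicontinuous_at A (tA : topology A) Z (d : metric Z)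
  (g : A -> Z) (a : A) : Prop :=
  forall U W, nbhd tA a U -> metric_nbhd d (g a) W ->
    exists O, open tA O /\ (exists x, O x) /\
      (forall x, O x -> U x) /\ (forall x, O x -> W (g x)).

Definition quasicontinuous A (tA : topology A) Z (d : metric Z)
  (g : A -> Z) : Prop := forall a, quasicontinuous_at tA d g a.

Definition countable_base Y (tY : topology Y) : Prop :=
  exists B : nat -> (Y -> Prop), (forall n, open tY (B n)) /\
    forall V y, open tY V -> V y -> exists n, B n y /\ forall z, B n z -> V z.

Definition dense X (tX : topology X) (D : X -> Prop) : Prop :=
  forall U, open tX U -> (exists x, U x) -> exists x, U x /\ D x.

Definition residual X (tX : topology X) (R0 : X -> Prop) : Prop :=
  exists D : nat -> (X -> Prop),
    (forall n, open tX (D n) /\ dense tX (D n)) /\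
    forall x, (forall n, D n x) -> R0 x.

(** For a family [P] of open sets, the points having an open neighbourhood
    that either belongs to [P] or misses every member of [P] form an open dense
    set. Take [P] to be "the oscillation of [f] over a basic set [B n] is large"
    resp. "small", at every scale [1/(k+1)]: countably many open dense sets,
    whose intersection is the residual set. At a point [a] of it where [f_a] is
    continuous at [b], a neighbourhood of [a] cannot carry large oscillation of
    [f_a] over a small basic neighbourhood [B n] of [b]; quasicontinuity of the
    maps [f^y] then produces a nonempty open set [O] with [O × B n] mapped close
    to [f (a, b)], so the neighbourhood of [a] cannot miss every set of small
    oscillation, hence it is one, which is continuity at [(a, b)]. *)

From Pilot Require Import Defs.
From Stdlib Require Import Reals Lra Lia Classical Cantor.
Open Scope R_scope.

Section Settled.

Context {X : Type} (tX : topology X).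

Definition union_of (P : (X -> Prop) -> Prop) : X -> Prop :=
  fun x => exists O, (open tX O /\ P O) /\ O x.

Definition settled (P : (X -> Prop) -> Prop) : X -> Prop :=
  union_of (fun O => P O \/ forall z, O z -> ~ union_of P z).

Lemma open_settled P : open tX (settled P).
Proof. apply (open_union tX); intros U [HU _]; exact HU. Qed.

Lemma dense_settled P : dense tX (settled P).
Proof.
  intros U HU [x0 Ux0].
  destruct (classic (exists z, U z /\ union_of P z))
    as [[z [Uz [O [[HO PO] Oz]]]] | noP].
  - exists z; split; [exact Uz|]. exists O; auto.
  - exists x0; split; [exact Ux0|]. exists U; repeat split; auto.
    right; intros z Uz Pz; apply noP; eauto.
Qed.

Lemma settledP {P a} : settled P a ->
  exists O, open tX O /\ O a /\
    (P O \/ forall O', open tX O' -> P O' -> forall z, O z -> ~ O' z).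
Proof.
  intros [O [[HO [PO | missP]] Oa]]; exists O; repeat split; auto.
  right; intros O' HO' PO' z Oz O'z; apply (missP z Oz); exists O'; auto.
Qed.

Lemma dense_inter A B : open tX A -> dense tX A -> dense tX B ->
  dense tX (fun x => A x /\ B x).
Proof.
  intros oA dA dB U HU neU.
  destruct (dA U HU neU) as [x1 [Ux1 Ax1]].
  destruct (dB _ (open_inter tX _ _ HU oA)) as [x2 [[Ux2 Ax2] Bx2]]; eauto.
Qed.

Lemma residual_open_dense2 (D : nat -> nat -> X -> Prop) :
  (forall n k, open tX (D n k)) -> (forall n k, dense tX (D n k)) ->
  residual tX (fun x => forall n k, D n k x).
Proof.
  intros oD dD.
  exists (fun m => D (fst (of_nat m)) (snd (of_nat m))); split.
  - intro m; auto.
  - intros x Dx n k; specialize (Dx (to_nat (n, k))).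
    rewrite cancel_of_to in Dx; exact Dx.
Qed.

End Settled.

Lemma open_nbhd {X} {tX : topology X} {O : X -> Prop} {x : X} : open tX O -> O x -> nbhd tX x O.
Proof. intros; exists O; auto. Qed.

Lemma prod_open_rect {X Y} {tX : topology X} {tY : topology Y} {U V} :
  open tX U -> open tY V -> prod_open tX tY (fun p => U (fst p) /\ V (snd p)).
Proof. intros HU HV [x y] [Ux Vy]; exists U, V; repeat split; auto. Qed.

Section Metric.

Context {Z : Type} (d : metric Z).

Lemma dist_tri_l x y z : Defs.dist d x z <= Defs.dist d y x + Defs.dist d y z.
Proof. rewrite (Defs.dist_sym d y x); apply Defs.dist_tri. Qed.

Lemma ball_open c r : metric_open d (ball d c r).
Proof.
  intros z Hz; unfold ball in *; exists (r - Defs.dist d c z); split; [lra|].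
  intros w Hw; pose proof (Defs.dist_tri d c z w); lra.
Qed.

Lemma ball_nbhd c {r} : 0 < r -> metric_nbhd d c (ball d c r).
Proof.
  intro Hr; exists (ball d c r); split; [apply ball_open|split; auto].
  unfold ball; rewrite (proj2 (Defs.dist_eq0 d c c) eq_refl); exact Hr.
Qed.

Lemma metric_nbhd_ball {c N} : metric_nbhd d c N ->
  exists r, 0 < r /\ forall w, ball d c r w -> N w.
Proof.
  intros [W [HW [Wc WN]]]; destruct (HW c Wc) as [r [Hr HrW]]; eauto.
Qed.

End Metric.

Lemma inv_succ_pos k : 0 < / INR (S k).
Proof. apply Rinv_0_lt_compat, lt_0_INR; lia. Qed.

Lemma inv_succ_lt r : 0 < r -> exists k, / INR (S k) < r.
Proof.
  intro Hr; destruct (archimed_cor1 r Hr) as [n [Hn n_pos]].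
  exists (pred n); replace (S (pred n)) with n by lia; exact Hn.
Qed.

Section Oscillation.

Context {X Y Z : Type} (tX : topology X) (d : metric Z) (f : X * Y -> Z).

Definition osc_large (V : Y -> Prop) (e : R) (O : X -> Prop) : Prop :=
  exists y y', V y /\ V y' /\
    forall x, O x -> e < Defs.dist d (f (x, y)) (f (x, y')).

Definition osc_small (V : Y -> Prop) (e : R) (O : X -> Prop) : Prop :=
  forall x x' y y', O x -> O x' -> V y -> V y' ->
    Defs.dist d (f (x, y)) (f (x', y')) <= e.

Lemma not_osc_large_at a b V e O : O a ->
  (forall y, V y -> Defs.dist d (f (a, b)) (f (a, y)) < e / 2) ->
  ~ osc_large V e O.
Proof.
  intros Oa near [y [y' [Vy [Vy' far]]]].
  specialize (far a Oa); pose proof (near y Vy); pose proof (near y' Vy').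
  pose proof (dist_tri_l d (f (a, y)) (f (a, b)) (f (a, y'))); lra.
Qed.

Lemma osc_small_near a b V e O :
  (forall x y, O x -> V y -> Defs.dist d (f (a, b)) (f (x, y)) <= e) ->
  osc_small V (2 * e) O.
Proof.
  intros near x x' y y' Ox Ox' Vy Vy'.
  pose proof (near x y Ox Vy); pose proof (near x' y' Ox' Vy').
  pose proof (dist_tri_l d (f (x, y)) (f (a, b)) (f (x', y'))); lra.
Qed.

Hypothesis quasi : forall y, quasicontinuous tX d (fun x => f (x, y)).

(* Moving [f (x, y)] to a nearby [f (z, y)] by quasicontinuity of [f^y], the
   points [z] where [f (z, y)] and [f (z, b)] are [e]-far would form an open
   set of large oscillation inside [OA]. *)
Lemma near_on_rectangle {a b V e} {OA O : X -> Prop} :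
  V b -> 0 < e ->
  (forall O', open tX O' -> osc_large V e O' -> forall z, OA z -> ~ O' z) ->
  open tX O -> (forall x, O x -> OA x) ->
  (forall x, O x -> Defs.dist d (f (a, b)) (f (x, b)) < e) ->
  forall x y, O x -> V y -> Defs.dist d (f (a, b)) (f (x, y)) <= 3 * e.
Proof.
  intros Vb He missA HO OA_O nearb x y Ox Vy.
  destruct (quasi y x _ _ (open_nbhd HO Ox) (ball_nbhd d (f (x, y)) He))
    as [O1 [HO1 [[z1 O1z1] [O_O1 nearxy]]]].
  destruct (classic (exists z, O1 z /\ Defs.dist d (f (z, y)) (f (z, b)) <= e))
    as [[z [O1z close]] | far].
  - pose proof (nearxy z O1z) as near_xz; pose proof (nearb z (O_O1 z O1z)).
    unfold ball in near_xz; simpl in near_xz.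
    pose proof (Defs.dist_tri d (f (a, b)) (f (z, b)) (f (x, y))).
    pose proof (dist_tri_l d (f (z, b)) (f (z, y)) (f (x, y))).
    rewrite (Defs.dist_sym d (f (x, y)) (f (z, y))) in near_xz; lra.
  - exfalso; apply (missA O1 HO1) with z1; auto.
    exists y, b; repeat split; auto; intros z O1z.
    apply Rnot_le_lt; intro close; apply far; eauto.
Qed.

Lemma settled_osc_small (a : X) (b : Y) (V : Y -> Prop) (e : R) :
  V b -> 0 < e ->
  (forall y, V y -> Defs.dist d (f (a, b)) (f (a, y)) < e / 2) ->
  settled tX (osc_large V e) a -> settled tX (osc_small V (6 * e)) a ->
  exists O, open tX O /\ O a /\ osc_small V (6 * e) O.
Proof.
  intros Vb He nearb setA setC.
  destruct (settledP tX setA) as [OA [HOA [OAa [largeA | missA]]]].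
  { exfalso; exact (@not_osc_large_at a b V e OA OAa nearb largeA). }
  destruct (settledP tX setC) as [OC [HOC [OCa [smallC | missC]]]]; [eauto|].
  exfalso.
  destruct (quasi b a _ _ (open_nbhd (open_inter tX _ _ HOA HOC) (conj OAa OCa))
              (ball_nbhd d (f (a, b)) He))
    as [O [HO [[z Oz] [O_OAC nearO]]]].
  apply (missC O HO) with z; auto.
  - replace (6 * e) with (2 * (3 * e)) by ring.
    apply (osc_small_near a b).
    apply (near_on_rectangle Vb He missA HO).
    + intros x Ox; exact (proj1 (O_OAC x Ox)).
    + exact nearO.
  - exact (proj2 (O_OAC z Oz)).
Qed.

End Oscillation.

Theorem corollary3p5 (X Y Z : Type) (tX : topology X) (tY : topology Y)
  (d : metric Z) (f : X * Y -> Z) :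
  countable_base tY ->
  (forall y : Y, quasicontinuous tX d (fun x => f (x, y))) ->
  exists R0 : X -> Prop, residual tX R0 /\
    forall a b, R0 a ->
      continuous_at tY d (fun y => f (a, y)) b ->
      continuous_at_gen (prod_open tX tY) d f (a, b).
Proof.
  intros [B [HB base]] quasi.
  set (eps := fun k => / INR (S k)).
  exists (fun a => forall n k,
    settled tX (osc_large d f (B n) (eps k)) a /\
    settled tX (osc_small d f (B n) (6 * eps k)) a).
  split.
  { apply residual_open_dense2; intros n k.
    - apply open_inter; apply open_settled.
    - apply dense_inter; [apply open_settled | apply dense_settled..]. }
  intros a b Ra cont N HN.
  destruct (metric_nbhd_ball d HN) as [r [Hr ballN]].
  destruct (inv_succ_lt (r / 6)) as [k Hk]; [lra|].
  pose proof (inv_succ_pos k) as Hek.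
  assert (Hek2 : 0 < eps k / 2) by (unfold eps; lra).
  destruct (cont _ (ball_nbhd d (f (a, b)) Hek2)) as [V [HV [Vb nearV]]].
  destruct (base V b HV Vb) as [n [Bnb BnV]].
  destruct (Ra n k) as [setA setC].
  destruct (settled_osc_small tX d f quasi a b (B n) (eps k) Bnb Hek
              (fun y By => nearV y (BnV y By)) setA setC) as [O [HO [Oa small]]].
  exists (fun p => O (fst p) /\ B n (snd p)); split; [|split].
  - exact (prod_open_rect HO (HB n)).
  - simpl; auto.
  - intros [x y] [Ox Bny]; apply ballN; unfold ball.
    pose proof (small a x b y Oa Ox Bnb Bny); unfold eps in *; lra.
Qed.
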